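(* Let $L\subseteq\Sigma^*$ be accepted by an end-decisive MM-QFA with bounded positive one-sided error and positive amplitude. Then there exists an end-decisive MM-QFA that accepts $\Sigma^*\setminus L$ with bounded error.
   Context: A measure-many quantum finite automaton (MM-QFA) over $\Sigma$ is a tuple $(Q,\Sigma,\{U_\sigma\}_{\sigma\in\Sigma\cup\{\$\}},q_0,Q_{acc},Q_{rej})$ with $Q$ finite indexing an orthonormal basis of $\mathbb{C}^Q$, end-marker $\$\notin\Sigma$, unitary $U_\sigma$, initial state $q_0$, and $Q$ partitioned into $Q_{acc},Q_{rej},Q_{non}$ with orthogonal projections $P_{acc},P_{rej},P_{non}$. On input $x$ it processes $x\$$ maintaining $(\psi,p_{acc},p_{rej})$, initially $(|q_0\rangle,0,0)$; on reading $\sigma$: $\psi'=U_\sigma\psi$, $p_{acc}\mathrel{+}=\|P_{acc}\psi'\|^2$, $p_{rej}\mathrel{+}=\|P_{rej}\psi'\|^2$, $\psi\leftarrow P_{non}\psi'$; the acceptance probability $p(x)$ is the final $p_{acc}$. It is end-decisive if $P_{acc}\psi'=0$ after reading every non-end-marker symbol, on every input. It accepts with positive amplitude if, on every input and at every step, the coordinates of $\psi'$ on the accepting basis states are non-negative reals. It accepts $L$ with bounded positive one-sided error if there is $c>0$ with $p(x)>c$ for $x\in L$ and $p(x)=0$ for $x\notin L$; it accepts a language $K$ with bounded error if for some $\lambda$ and $\epsilon>0$, $p(x)>\lambda+\epsilon$ for $x\in K$ and $p(x)<\lambda-\epsilon$ for $x\notin K$. *)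

From HB Require Import structures.
From mathcomp Require Import all_boot all_order all_algebra.
From mathcomp Require Import sesquilinear spectral.
From mathcomp Require Import complex.
From mathcomp Require Import reals.
Set Implicit Arguments. Unset Strict Implicit. Unset Printing Implicit Defensive.
Import Order.TTheory GRing.Theory Num.Theory.
Local Open Scope ring_scope.

Inductive qclass := Acc | Rej | Non.
Definition qclass_eqb (a b : qclass) : bool :=
  match a, b with Acc, Acc | Rej, Rej | Non, Non => true | _, _ => false end.

Section MMQFA.
Variables (R : realType) (Sigma : finType).
Local Notation C := (R[i]).

(* Basis states are 'I_n; the tape alphabet is
   option Sigma, where [None] is the end-marker $ and [Some s] is s in Sigma. *)
Record mmqfa := MMQFA {
  nst : nat;
  U : option Sigma -> 'M[C]_nst;
  U_unitary : forall s, U s \is unitarymx;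
  q0 : 'I_nst;
  cls : 'I_nst -> qclass
}.
Arguments nst m : clear implicits.
Arguments U m _ : clear implicits.
Arguments q0 m : clear implicits.
Arguments cls m _ : clear implicits.

Variable M : mmqfa.

Definition proj (k : qclass) : 'M[C]_(nst M) :=
  diag_mx (\row_i (if qclass_eqb (cls M i) k then 1 else 0)).

Definition sqnorm (v : 'cV[C]_(nst M)) : R :=
  \sum_i ((complex.Re (v i 0)) ^+ 2 + (complex.Im (v i 0)) ^+ 2).

Definition psi0 : 'cV[C]_(nst M) := \col_i (if i == q0 M then 1 else 0).

(* configuration (psi, p_acc, p_rej) *)
Definition config := ('cV[C]_(nst M) * R * R)%type.

Definition step (c : config) (s : option Sigma) : config :=
  let: (psi, pa, pr) := c in
  let psi' := U M s *m psi in
  (proj Non *m psi', pa + sqnorm (proj Acc *m psi'), pr + sqnorm (proj Rej *m psi')).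

Definition run (w : seq (option Sigma)) : config := foldl step (psi0, 0, 0) w.

Definition psi_after (x : seq Sigma) : 'cV[C]_(nst M) :=
  (run (map Some x)).1.1.

Definition acc_prob (x : seq Sigma) : R :=
  (run (rcons (map Some x) None)).1.2.

Definition end_decisive : Prop :=
  forall (x : seq Sigma) (s : Sigma),
    proj Acc *m (U M (Some s) *m psi_after x) = 0.

(* accepts with positive amplitude: at every step on every input, the
   coordinates of psi' on accepting basis states are non-negative reals *)
Definition positive_amplitude : Prop :=
  forall (x : seq Sigma) (s : option Sigma) (i : 'I_(nst M)),
    cls M i = Acc -> 0 <= (U M s *m psi_after x) i 0.

Definition accepts_one_sided (L : seq Sigma -> Prop) : Prop :=
  exists c : R, 0 < c /\
    forall x, (L x -> c < acc_prob x) /\ (~ L x -> acc_prob x = 0).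

Definition accepts_bounded (K : seq Sigma -> Prop) : Prop :=
  exists lambda eps : R, 0 < eps /\
    forall x, (K x -> lambda + eps < acc_prob x) /\
              (~ K x -> acc_prob x < lambda - eps).

End MMQFA.
Arguments nst {R Sigma} m.
Arguments U {R Sigma} m _.
Arguments q0 {R Sigma} m.
Arguments cls {R Sigma} m _.

From HB Require Import structures.
From mathcomp Require Import all_boot all_order all_algebra.
From mathcomp Require Import sesquilinear spectral complex reals ring lra.
Import Order.TTheory GRing.Theory Num.Theory.
Local Open Scope ring_scope.
Local Open Scope sesquilinear_scope.
Set Implicit Arguments. Unset Strict Implicit. Unset Printing Implicit Defensive.

(** The complementing automaton adjoins to M a reference state, an accepting state and
    a rejecting state.  Its transitions are those of M conjugated by a reflection sending
    |q0> to (3/5)|q0> - (4/5)|ref>; this reflection commutes with the measurement, so after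
    reading x the automaton is, up to the reflection, in (3/5)psi_x - (4/5)|ref>.  On the
    end-marker a second reflection lets the reference amplitude interfere with the accepting
    amplitudes a_i of M, which are reals in [0, 1] by positivity: the new accepting state
    receives an amplitude proportional to 4/5 - (3/5) t (sum_i a_i).  For x not in L all a_i
    vanish, while for x in L, sum_i a_i >= sum_i a_i^2 = p(x) > c; hence the two cases are
    separated by a fixed gap in acceptance probability. *)

(** * Householder reflections *)

Section Householder.
Variables (R : rcfType) (n : nat).
Local Notation C := (R[i]).
Local Notation toC := (real_complex R).

Definition sqnormR (w : 'cV[R]_n) : R := \sum_i w i 0 ^+ 2.

Definition householderR (w : 'cV[R]_n) : 'M[R]_n :=
  1%:M - (2 / sqnormR w) *: (w *m w^T).

Definition householder (w : 'cV[R]_n) : 'M[C]_n := map_mx toC (householderR w).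

Variable w : 'cV[R]_n.
Hypothesis w_neq0 : sqnormR w != 0.

Lemma trmx_householderR : (householderR w)^T = householderR w.
Proof. by rewrite /householderR linearB /= linearZ /= trmx1 trmx_mul trmxK. Qed.

Lemma householderR_invol : householderR w *m householderR w = 1%:M.
Proof.
have wTw : w^T *m w = (sqnormR w)%:M.
  rewrite [LHS]mx11_scalar mxE; congr scalar_mx.
  by apply: eq_bigr => i _; rewrite mxE expr2.
have wwT2 : (w *m w^T) *m (w *m w^T) = sqnormR w *: (w *m w^T).
  by rewrite mulmxA -(mulmxA w) wTw mul_mx_scalar scalemxAl.
rewrite /householderR mulmxBl !mulmxBr !mul1mx mulmx1 -scalemxAr -scalemxAl.
rewrite wwT2 !scalerA.
have -> : 2 / sqnormR w * (2 / sqnormR w) * sqnormR w = 2 / sqnormR w + 2 / sqnormR w.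
  by field.
by rewrite scalerDl; set Q := _ *: _; rewrite opprB addrK subrK.
Qed.

Lemma householder_invol : householder w *m householder w = 1%:M.
Proof. by rewrite -map_mxM householderR_invol map_mx1. Qed.

Lemma householder_unitary : householder w \is unitarymx.
Proof.
apply/unitarymxP; have -> : (householder w)^t* = householder w.
  rewrite /householder map_trmx trmx_householderR -map_mx_comp.
  by apply: eq_map_mx => x; exact: conjc_real.
exact: householder_invol.
Qed.

Lemma householderE (y : 'cV[C]_n) i :
  (householder w *m y) i 0 =
  y i 0 - toC (2 / sqnormR w * w i 0) * \sum_j toC (w j 0) * y j 0.
Proof.
rewrite mxE.
under eq_bigr => j _ do rewrite !mxE big_ord1 !mxE rmorphB /= mulrBl.
rewrite sumrB (bigD1 i) //= eqxx big1 ?addr0 ?mul1r => [|j /negPf]; last first.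
  by rewrite eq_sym => ->; rewrite mul0r.
by congr (_ - _); rewrite mulr_sumr; apply: eq_bigr => j _; rewrite !rmorphM; ring.
Qed.

Lemma diag_mx_householderC (d : 'rV[C]_n) :
  (forall i, w i 0 != 0 -> d 0 i = 1) ->
  diag_mx d *m householder w = householder w *m diag_mx d.
Proof.
move=> d1; rewrite mul_diag_mx mul_mx_diag; apply/matrixP => i j.
rewrite !mxE big_ord1 !mxE.
have [->|neq_ij] := eqVneq i j; first by rewrite mulrC.
have [wi0|/d1->] := eqVneq (w i ord0) 0.
  by rewrite wi0 !(mul0r, mulr0, mulr0n, subr0, rmorph0).
have [wj0|/d1->] := eqVneq (w j ord0) 0.
  by rewrite wj0 !(mul0r, mulr0, mulr0n, subr0, rmorph0).
by rewrite mul1r mulr1.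
Qed.

Lemma diag_mx_householder_id (d : 'rV[C]_n) :
  (forall i, d 0 i != 0 -> w i 0 = 0) -> diag_mx d *m householder w = diag_mx d.
Proof.
move=> w0; rewrite mul_diag_mx; apply/matrixP => i j; rewrite !mxE big_ord1 !mxE.
have [->|/w0->] := eqVneq (d 0 i) 0; first by rewrite mul0r mul0rn.
by rewrite !(mul0r, mulr0, subr0); case: (i == j); rewrite ?rmorph1 ?rmorph0 ?mulr1 ?mulr0.
Qed.

End Householder.

Lemma unitarymx1 (C : numClosedFieldType) n : (1%:M : 'M[C]_n) \is unitarymx.
Proof. by apply/unitarymxP; rewrite mul1mx trmx1 map_mx1. Qed.

Lemma block_mx_unitary (C : numClosedFieldType) m n (A : 'M[C]_m) (B : 'M[C]_n) :
  A \is unitarymx -> B \is unitarymx -> block_mx A 0 0 B \is unitarymx.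
Proof.
move=> /unitarymxP AA /unitarymxP BB; apply/unitarymxP.
rewrite tr_block_mx map_block_mx mulmx_block !trmx0 !map_mx0 !mulmx0 !mul0mx.
by rewrite AA BB !addr0 add0r -scalar_mx_block.
Qed.

Section Run.
Variables (R : realType) (Sigma : finType) (M : mmqfa R Sigma).
Local Notation C := (R[i]).
Local Notation toC := (real_complex R).

Lemma run_rcons w s : run M (rcons w s) = step (run M w) s.
Proof. by rewrite /run foldl_rcons. Qed.

Lemma psi_after_rcons x s :
  psi_after M (rcons x s) = proj M Non *m (U M (Some s) *m psi_after M x).
Proof.
rewrite /psi_after map_rcons run_rcons.
by case: (run M (map Some x)) => [[psi pa] pr].
Qed.

Lemma projE k (v : 'cV[C]_(nst M)) i j :
  (proj M k *m v) i j = if qclass_eqb (cls M i) k then v i j else 0.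
Proof. by rewrite mul_diag_mx !mxE; case: ifP; rewrite ?mul1r ?mul0r. Qed.

Lemma sqnorm0 : sqnorm (0 : 'cV[C]_(nst M)) = 0.
Proof. by rewrite /sqnorm big1 // => i _; rewrite mxE expr0n addr0. Qed.

Lemma sqnorm_proj_le k (v : 'cV[C]_(nst M)) : sqnorm (proj M k *m v) <= sqnorm v.
Proof.
apply: ler_sum => i _; rewrite projE; case: ifP => // _.
by rewrite expr0n addr0 addr_ge0 ?sqr_ge0.
Qed.

Lemma sqnorm_toC (v : 'cV[C]_(nst M)) : toC (sqnorm v) = (v^t* *m v) 0 0.
Proof.
rewrite rmorph_sum mxE; apply: eq_bigr => i _.
by rewrite /= add_Re2_Im2 sqr_normc mulrC !mxE.
Qed.

Lemma sqnorm_unitary (A : 'M[C]_(nst M)) (v : 'cV[C]_(nst M)) :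
  A \is unitarymx -> sqnorm (A *m v) = sqnorm v.
Proof.
move/unitarymxP/mulmx1C => AtA; apply: (@complexI R); rewrite !sqnorm_toC.
by rewrite trmx_mul map_mxM -mulmxA (mulmxA (A^t*)) AtA mul1mx.
Qed.

Lemma sqnorm_psi0 : sqnorm (psi0 M) = 1.
Proof.
rewrite /sqnorm (bigD1 (q0 M)) //= big1 => [|i /negPf neq_i]; rewrite !mxE ?neq_i.
  by rewrite eqxx expr1n expr0n !addr0.
by rewrite expr0n addr0.
Qed.

Lemma sqnorm_psi_after_le1 x : sqnorm (psi_after M x) <= 1.
Proof.
elim/last_ind: x => [|x s IH]; first by rewrite sqnorm_psi0.
rewrite psi_after_rcons (le_trans (sqnorm_proj_le _ _)) //.
by rewrite sqnorm_unitary ?U_unitary.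
Qed.

Hypothesis ed : end_decisive M.

Lemma end_decisive_run_acc0 x : (run M (map Some x)).1.2 = 0.
Proof.
elim/last_ind: x => [|x s IH] //; rewrite map_rcons run_rcons.
have := ed x s; rewrite /psi_after.
by case: (run M (map Some x)) IH => [[psi pa] pr] /= -> ->; rewrite sqnorm0 addr0.
Qed.

Lemma end_decisive_acc_probE x :
  acc_prob M x = sqnorm (proj M Acc *m (U M None *m psi_after M x)).
Proof.
rewrite /acc_prob run_rcons /psi_after.
have := end_decisive_run_acc0 x.
by case: (run M (map Some x)) => [[psi pa] pr] /= ->; rewrite add0r.
Qed.

End Run.

Section AcceptingMass.
Variables (R : realType) (Sigma : finType) (M : mmqfa R Sigma).
Local Notation toC := (real_complex R).

Definition is_acc (i : 'I_(nst M)) := qclass_eqb (cls M i) Acc.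
Definition acc_amp x i : R := complex.Re ((U M None *m psi_after M x) i 0).
Definition acc_mass x : R := \sum_(i | is_acc i) acc_amp x i.
Definition acc_count : R := \sum_(i | is_acc i) 1.

Lemma acc_amp_le1 x i : acc_amp x i <= 1.
Proof.
have : acc_amp x i ^+ 2 <= 1.
  apply: (le_trans _ (sqnorm_psi_after_le1 M x)).
  rewrite -(sqnorm_unitary _ (U_unitary M None)) /sqnorm (bigD1 i) //=.
  rewrite -addrA ler_wpDr // addr_ge0 ?sqr_ge0 ?sumr_ge0 // => j _.
  by rewrite addr_ge0 ?sqr_ge0.
by nra.
Qed.

Lemma acc_mass_le_count x : acc_mass x <= acc_count.
Proof. by apply: ler_sum => i _; exact: acc_amp_le1. Qed.

Lemma acc_count_ge0 : 0 <= acc_count.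
Proof. by apply: sumr_ge0 => i _; exact: ler01. Qed.

Hypothesis pos : positive_amplitude M.

Lemma acc_ampE x i :
  is_acc i -> (U M None *m psi_after M x) i 0 = toC (acc_amp x i).
Proof.
rewrite /is_acc /acc_amp => acc_i.
have /pos : cls M i = Acc by move: acc_i; case: (cls M i).
by move=> /(_ x None); case: (_ i 0) => a b; rewrite lecE /= => /andP[/eqP-> _].
Qed.

Lemma acc_amp_ge0 x i : is_acc i -> 0 <= acc_amp x i.
Proof.
move=> acc_i; rewrite -lecR -acc_ampE //.
by apply: pos; move: acc_i; rewrite /is_acc; case: (cls M i).
Qed.

Hypothesis ed : end_decisive M.

Lemma acc_prob_sum_sqr x : acc_prob M x = \sum_(i | is_acc i) acc_amp x i ^+ 2.
Proof.
rewrite end_decisive_acc_probE // /sqnorm (bigID is_acc) /= [X in _ + X]big1 => [|i].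
  rewrite addr0; apply: eq_bigr => i acc_i.
  by rewrite projE -/(is_acc i) acc_i acc_ampE //= expr0n addr0.
by rewrite projE -/(is_acc i) => /negPf->; rewrite expr0n addr0.
Qed.

Lemma acc_prob_le_mass x : acc_prob M x <= acc_mass x.
Proof.
rewrite acc_prob_sum_sqr; apply: ler_sum => i acc_i.
by have := acc_amp_ge0 x acc_i; have := acc_amp_le1 x i; nra.
Qed.

Lemma acc_mass_eq0 x : acc_prob M x = 0 -> acc_mass x = 0.
Proof.
rewrite acc_prob_sum_sqr => /eqP; rewrite psumr_eq0 => [/allP sq0|i _]; last first.
  exact: sqr_ge0.
apply: big1 => i acc_i; apply/eqP; rewrite -sqrf_eq0.
by move: (sq0 i (mem_index_enum i)); rewrite acc_i.
Qed.

End AcceptingMass.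

(** * The complementing automaton *)

Section Construction.
Variables (R : realType) (Sigma : finType) (M : mmqfa R Sigma).
Local Notation C := (R[i]).
Local Notation toC := (real_complex R).
Local Notation n := (nst M).
Local Notation N := (n + 3)%N.

Definition qold (i : 'I_n) : 'I_N := lshift 3 i.
Definition qref : 'I_N := rshift n (@Ordinal 3 0 isT).
Definition qacc : 'I_N := rshift n (@Ordinal 3 1 isT).
Definition qrej : 'I_N := rshift n (@Ordinal 3 2 isT).

Lemma split_qold (i : 'I_n) : split (qold i) = inl i.
Proof. exact: (unsplitK (inl _ i)). Qed.

Lemma split_rshift (k : 'I_3) : split (rshift n k) = inr k.
Proof. exact: (unsplitK (inr _ k)). Qed.

Lemma ext_ordP (P : 'I_N -> Prop) :
  (forall i, P (qold i)) -> P qref -> P qacc -> P qrej -> forall j, P j.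
Proof.
move=> Pold Pref Pacc Prej j; case: (split_ordP j) => [i ->|[[|[|[|k]]] lt_k3] ->] //.
- by rewrite (_ : Ordinal lt_k3 = Ordinal (isT : 0 < 3))%N //; apply: val_inj.
- by rewrite (_ : Ordinal lt_k3 = Ordinal (isT : 1 < 3))%N //; apply: val_inj.
- by rewrite (_ : Ordinal lt_k3 = Ordinal (isT : 2 < 3))%N //; apply: val_inj.
Qed.

Lemma ext_colP (u v : 'cV[C]_N) :
  (forall i, u (qold i) 0 = v (qold i) 0) -> u qref 0 = v qref 0 ->
  u qacc 0 = v qacc 0 -> u qrej 0 = v qrej 0 -> u = v.
Proof.
move=> Eold Eref Eacc Erej; apply/matrixP => j k; rewrite (ord1 k).
by move: j; apply: ext_ordP.
Qed.

Lemma sum_ext (V : nmodType) (f : 'I_N -> V) :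
  \sum_j f j = \sum_i f (qold i) + f qref + f qacc + f qrej.
Proof.
rewrite big_split_ord /= !big_ord_recl big_ord0 addr0 !addrA.
by congr (_ + f _ + f _ + f _); apply: val_inj.
Qed.

Definition is_non (i : 'I_n) := qclass_eqb (cls M i) Non.

(* The accepting states of M become rejecting: acceptance is decided by [qacc] alone. *)
Definition ext_cls (j : 'I_N) : qclass :=
  match split j with
  | inl i => if is_non i || (i == q0 M) then Non else Rej
  | inr k => if val k == 0%N then Non else if val k == 1%N then Acc else Rej
  end.

Lemma ext_cls_old i : ext_cls (qold i) = if is_non i || (i == q0 M) then Non else Rej.
Proof. by rewrite /ext_cls split_qold. Qed.

Lemma ext_cls_ref : ext_cls qref = Non.
Proof. by rewrite /ext_cls split_rshift. Qed.

Lemma ext_cls_acc : ext_cls qacc = Acc.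
Proof. by rewrite /ext_cls split_rshift. Qed.

Lemma ext_cls_rej : ext_cls qrej = Rej.
Proof. by rewrite /ext_cls split_rshift. Qed.

Definition w_swap : 'cV[R]_N := \col_j ((j == qold (q0 M))%:R - (j == qrej)%:R).
Definition w_prep : 'cV[R]_N := \col_j ((j == qold (q0 M))%:R + 2 * (j == qref)%:R).
(* [mix_rate * (acc_count M + 1) = 1] keeps the final amplitude positive. *)
Definition mix_rate : R := 1 / (acc_count M + 1).
Definition w_final : 'cV[R]_N :=
  col_mx (\col_i (if is_acc i then mix_rate else 0))
         (\col_(k < 3) (if val k == 2%N then 0 else 1)).

Lemma sqnormR_w_swap : sqnormR w_swap = 2.
Proof.
rewrite /sqnormR sum_ext (bigD1 (q0 M)) //= big1 => [|i /negPf neq_i]; rewrite !mxE.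
  by rewrite /qold /qref /qacc /qrej !eq_shift !eqxx /=; ring.
by rewrite /qold /qrej !eq_shift neq_i subr0 expr0n.
Qed.

Lemma sqnormR_w_prep : sqnormR w_prep = 5.
Proof.
rewrite /sqnormR sum_ext (bigD1 (q0 M)) //= big1 => [|i /negPf neq_i]; rewrite !mxE.
  by rewrite /qold /qref /qacc /qrej !eq_shift !eqxx /=; ring.
by rewrite /qold /qref !eq_shift neq_i mulr0 addr0 expr0n.
Qed.

Lemma sqnormR_w_final_gt0 : 0 < sqnormR w_final.
Proof.
rewrite /sqnormR sum_ext /qref /qacc /qrej !col_mxEd !mxE /= expr1n.
have : 0 <= \sum_i w_final (qold i) 0 ^+ 2 by apply: sumr_ge0 => i _; exact: sqr_ge0.
by rewrite expr0n /=; lra.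
Qed.

Definition ext_mx (A : 'M[C]_n) : 'M[C]_N := block_mx A 0 0 1%:M.
(* The copy of [q0 M] must be non-halting for [prep_mx] to commute with the measurement;
   when [q0 M] halts in M, [swap_mx] moves its amplitude to [qrej] before measuring. *)
Definition swap_mx : 'M[C]_N := if is_non (q0 M) then 1%:M else householder w_swap.
Definition prep_mx : 'M[C]_N := householder w_prep.
Definition final_mx : 'M[C]_N := householder w_final.
Definition core_mx (s : option Sigma) : 'M[C]_N :=
  if s is Some _ then swap_mx *m ext_mx (U M s) else final_mx *m ext_mx (U M None).

Lemma core_mx_unitary s : core_mx s \is unitarymx.
Proof.
have ext_U s' : ext_mx (U M s') \is unitarymx.
  by apply: block_mx_unitary; [exact: U_unitary | exact: unitarymx1].
case: s => [s|]; apply: mul_unitarymx => //; last first.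
  by apply: householder_unitary; rewrite gt_eqF ?sqnormR_w_final_gt0.
rewrite /swap_mx; case: ifP => _; first exact: unitarymx1.
by apply: householder_unitary; rewrite sqnormR_w_swap pnatr_eq0.
Qed.

Lemma compl_U_unitary s : prep_mx *m core_mx s *m prep_mx \is unitarymx.
Proof.
have prep_unitary : prep_mx \is unitarymx.
  by apply: householder_unitary; rewrite sqnormR_w_prep pnatr_eq0.
by rewrite !mul_unitarymx ?core_mx_unitary.
Qed.

Definition compl_qfa : mmqfa R Sigma := MMQFA compl_U_unitary (qold (q0 M)) ext_cls.

End Construction.

Local Ltac complex_lra :=
  apply/eqP; rewrite eq_complex /=; apply/andP; split; apply/eqP; lra.

Section ComplementRun.
Variables (R : realType) (Sigma : finType) (M : mmqfa R Sigma).
Local Notation C := (R[i]).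
Local Notation toC := (real_complex R).
Local Notation n := (nst M).
Local Notation N := (n + 3)%N.
Local Notation M' := (compl_qfa M).

Lemma sum_w_swap (y : 'cV[C]_N) :
  \sum_j toC (w_swap M j 0) * y j 0 = y (qold (q0 M)) 0 - y (qrej M) 0.
Proof.
rewrite sum_ext (bigD1 (q0 M)) //= big1 => [|i /negPf neq_i]; rewrite !mxE.
  by rewrite /qold /qref /qacc /qrej !eq_shift eqxx /= !(rmorph0, rmorph1, rmorphN); ring.
by rewrite /qold /qrej !eq_shift neq_i subr0 rmorph0 mul0r.
Qed.

Lemma sum_w_prep (y : 'cV[C]_N) :
  \sum_j toC (w_prep M j 0) * y j 0 = y (qold (q0 M)) 0 + toC 2 * y (qref M) 0.
Proof.
rewrite sum_ext (bigD1 (q0 M)) //= big1 => [|i /negPf neq_i]; rewrite !mxE.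
  by rewrite /qold /qref /qacc /qrej !eq_shift eqxx /= !(rmorph0, rmorph1, rmorphM); ring.
by rewrite /qold /qref !eq_shift neq_i mulr0 addr0 rmorph0 mul0r.
Qed.

Lemma sum_w_final (y : 'cV[C]_N) :
  \sum_j toC (w_final M j 0) * y j 0 =
  toC (mix_rate M) * \sum_(i | is_acc i) y (qold i) 0 + y (qref M) 0 + y (qacc M) 0.
Proof.
rewrite sum_ext /qref /qacc /qrej !col_mxEd !mxE /= rmorph0 rmorph1 mul0r addr0 !mul1r.
congr (_ + _ + _); rewrite mulr_sumr (bigID (@is_acc _ _ M)) /= [X in _ + X]big1 ?addr0.
  by apply: eq_bigr => i acc_i; rewrite col_mxEu mxE acc_i.
by move=> i /negPf nacc_i; rewrite col_mxEu mxE nacc_i rmorph0 mul0r.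
Qed.

(* [prep_mx] sends [qold (q0 M)] to [(3/5) qold (q0 M) - (4/5) qref]. *)
Definition embed (v : 'cV[C]_n) : 'cV[C]_N :=
  col_mx (toC (3/5) *: v) (\col_(k < 3) if val k == 0%N then toC (- (4/5)) else 0).

Lemma embed_old v i : embed v (qold i) 0 = toC (3/5) * v i 0.
Proof. by rewrite col_mxEu !mxE. Qed.

Lemma embed_ref v : embed v (qref M) 0 = toC (- (4/5)).
Proof. by rewrite col_mxEd mxE. Qed.

Lemma embed_acc v : embed v (qacc M) 0 = 0.
Proof. by rewrite col_mxEd mxE. Qed.

Lemma embed_rej v : embed v (qrej M) 0 = 0.
Proof. by rewrite col_mxEd mxE. Qed.

Lemma ext_mx_embed A v : ext_mx A *m embed v = embed (A *m v).
Proof. by rewrite /ext_mx /embed mul_block_col !mul0mx addr0 add0r mul1mx scalemxAr. Qed.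

Lemma prep_mx_invol : prep_mx M *m prep_mx M = 1%:M.
Proof. by apply: householder_invol; rewrite sqnormR_w_prep pnatr_eq0. Qed.

Lemma prep_mx_psi0 : prep_mx M *m psi0 M' = embed (psi0 M).
Proof.
have psi0_q0 : psi0 M' (qold (q0 M)) 0 = 1 by rewrite mxE eqxx.
have psi0_ref : psi0 M' (qref M) 0 = 0 by rewrite mxE eq_rlshift.
apply: ext_colP => [i|||]; rewrite householderE sum_w_prep sqnormR_w_prep psi0_q0 psi0_ref.
all: rewrite ?embed_old ?embed_ref ?embed_acc ?embed_rej mulr0 addr0 mulr1.
all: rewrite !mxE /qold /qref /qacc /qrej ?eq_shift ?eq_rlshift ?eq_lrshift /=.
- by case: (i == q0 M); complex_lra.
all: by complex_lra.
Qed.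

Lemma projNon_prep_mxC : proj M' Non *m prep_mx M = prep_mx M *m proj M' Non.
Proof.
apply: diag_mx_householderC => j; rewrite !mxE /=; move: j.
apply: ext_ordP => [i|||]; rewrite ?ext_cls_old ?ext_cls_ref ?ext_cls_acc ?ext_cls_rej //.
all: rewrite /qold /qref /qacc /qrej ?eq_shift ?eq_rlshift ?eq_lrshift /=.
- by have [->|_] := eqVneq i (q0 M); rewrite ?orbT // mulr0 addr0 eqxx.
all: by rewrite mulr0 addr0 eqxx.
Qed.

Lemma projAcc_prep_mx : proj M' Acc *m prep_mx M = proj M' Acc.
Proof.
apply: diag_mx_householder_id => j; rewrite !mxE /=; move: j.
apply: ext_ordP => [i|||]; rewrite ?ext_cls_old ?ext_cls_ref ?ext_cls_acc ?ext_cls_rej //.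
all: rewrite /qold /qref /qacc /qrej ?eq_shift ?eq_rlshift ?eq_lrshift /=.
- by case: (is_non i || _); rewrite /= eqxx.
all: by rewrite ?eqxx // mulr0 addr0.
Qed.

Lemma swap_mxE (y : 'cV[C]_N) j :
  (swap_mx M *m y) j 0 = if is_non (q0 M) then y j 0
    else y j 0 - toC (w_swap M j 0) * (y (qold (q0 M)) 0 - y (qrej M) 0).
Proof.
rewrite /swap_mx; case: ifP => _; first by rewrite mul1mx.
by rewrite householderE sqnormR_w_swap sum_w_swap divff ?pnatr_eq0 // mul1r.
Qed.

Lemma swap_embed_old v i : (swap_mx M *m embed v) (qold i) 0 =
  if ~~ is_non (q0 M) && (i == q0 M) then 0 else toC (3/5) * v i 0.
Proof.
rewrite swap_mxE !embed_old embed_rej subr0; case: ifP => //= _.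
rewrite mxE /qold /qrej eq_shift eq_lrshift subr0.
by have [->|_] := eqVneq i (q0 M); rewrite ?rmorph1 ?mul1r ?subrr // rmorph0 mul0r subr0.
Qed.

Lemma swap_embed_ref v : (swap_mx M *m embed v) (qref M) 0 = toC (- (4/5)).
Proof.
rewrite swap_mxE embed_ref; case: ifP => // _.
by rewrite mxE /qold /qref /qrej eq_rlshift eq_shift /= subrr rmorph0 mul0r subr0.
Qed.

Lemma swap_embed_acc v : (swap_mx M *m embed v) (qacc M) 0 = 0.
Proof.
rewrite swap_mxE embed_acc; case: ifP => // _.
by rewrite mxE /qold /qacc /qrej eq_rlshift eq_shift /= subrr rmorph0 mul0r subr0.
Qed.

Lemma projNon_swap_embed v :
  proj M' Non *m (swap_mx M *m embed v) = embed (proj M Non *m v).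
Proof.
apply: ext_colP => [i|||]; rewrite (projE (M := M')) /=.
- rewrite ext_cls_old swap_embed_old embed_old projE -/(is_non i).
  have [->|neq_i] := eqVneq i (q0 M); rewrite ?orbT ?orbF ?andbF /=.
    by case: (is_non (q0 M)); rewrite /= ?mulr0.
  by case: (is_non i); rewrite /= ?mulr0.
- by rewrite ext_cls_ref swap_embed_ref embed_ref.
- by rewrite ext_cls_acc embed_acc.
- by rewrite ext_cls_rej embed_rej.
Qed.

Lemma projAcc_swap_embed v : proj M' Acc *m (swap_mx M *m embed v) = 0.
Proof.
apply: ext_colP => [i|||]; rewrite (projE (M := M')) /= [RHS]mxE.
- by rewrite ext_cls_old; case: (_ || _).
- by rewrite ext_cls_ref.
- by rewrite ext_cls_acc swap_embed_acc.
- by rewrite ext_cls_rej.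
Qed.

Lemma compl_U_prep s (y : 'cV[C]_N) :
  U M' s *m (prep_mx M *m y) = prep_mx M *m (core_mx M s *m y).
Proof. by rewrite /= -!mulmxA (mulmxA (prep_mx M) (prep_mx M)) prep_mx_invol mul1mx. Qed.

Lemma compl_psi_after x : psi_after M' x = prep_mx M *m embed (psi_after M x).
Proof.
elim/last_ind: x => [|x s IH].
  by rewrite -prep_mx_psi0 mulmxA prep_mx_invol mul1mx.
rewrite psi_after_rcons IH compl_U_prep (mulmxA (proj M' Non)) projNon_prep_mxC -mulmxA.
by rewrite /core_mx -mulmxA ext_mx_embed projNon_swap_embed psi_after_rcons.
Qed.

Lemma compl_qfa_end_decisive : end_decisive M'.
Proof.
move=> x s; rewrite compl_psi_after compl_U_prep (mulmxA (proj M' Acc)) projAcc_prep_mx.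
by rewrite /core_mx -mulmxA ext_mx_embed projAcc_swap_embed.
Qed.

Lemma sqnorm_projAcc (y : 'cV[C]_N) :
  sqnorm (proj M' Acc *m y) =
  complex.Re (y (qacc M) 0) ^+ 2 + complex.Im (y (qacc M) 0) ^+ 2.
Proof.
rewrite /sqnorm sum_ext !(projE (M := M')) /= ext_cls_ref ext_cls_acc ext_cls_rej /=.
rewrite big1 => [|i _]; first by rewrite expr0n /= !add0r !addr0.
by rewrite (projE (M := M')) /= ext_cls_old; case: (_ || _); rewrite /= expr0n addr0.
Qed.

Lemma final_mx_embed_acc v : (final_mx M *m embed v) (qacc M) 0 =
  toC (2 / sqnormR (w_final M)) *
  (toC (4/5) - toC (mix_rate M * (3/5)) * \sum_(i | is_acc i) v i 0).
Proof.
rewrite householderE sum_w_final embed_acc embed_ref.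
under eq_bigr => i _ do rewrite embed_old.
rewrite -mulr_sumr /w_final col_mxEd mxE /= !rmorphM !rmorphN /= rmorph1.
ring.
Qed.

End ComplementRun.

Lemma accepts_bounded_gap (R : realType) (Sigma : finType) (M : mmqfa R Sigma)
    (K : seq Sigma -> Prop) (lo hi : R) :
  lo < hi -> (forall x, K x -> hi <= acc_prob M x) ->
  (forall x, ~ K x -> acc_prob M x <= lo) -> accepts_bounded M K.
Proof.
move=> lt_lo_hi hiK loK; exists ((lo + hi) / 2), ((hi - lo) / 4); split; first lra.
by move=> x; split=> [/hiK | /loK]; lra.
Qed.

Section ComplementAcceptance.
Variables (R : realType) (Sigma : finType) (M : mmqfa R Sigma).
Local Notation toC := (real_complex R).

Definition compl_amp (s : R) : R :=
  2 / sqnormR (w_final M) * (4/5 - mix_rate M * (3/5) * s).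

Lemma sqr_compl_amp_lt s1 s2 :
  0 <= s1 -> s1 < s2 -> s2 <= acc_count M + 1 -> compl_amp s2 ^+ 2 < compl_amp s1 ^+ 2.
Proof.
move=> s1_ge0 lt_s12 s2_le.
have K1_gt0 : 0 < acc_count M + 1 by rewrite ltr_wpDl ?acc_count_ge0.
have t_gt0 : 0 < mix_rate M by rewrite divr_gt0.
have ts2_le1 : mix_rate M * s2 <= 1.
  by rewrite /mix_rate mul1r mulrC ler_pdivrMr // mul1r.
have D_gt0 : 0 < 2 / sqnormR (w_final M) by rewrite divr_gt0 ?sqnormR_w_final_gt0.
rewrite /compl_amp; set D := 2 / _ in D_gt0 *; set t := mix_rate M in t_gt0 ts2_le1 *.
have lt_ts : t * s1 < t * s2 by rewrite ltr_pM2l.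
have amp2_gt0 : 0 < D * (4/5 - t * (3/5) * s2) by rewrite mulr_gt0 //; lra.
have lt_amp : D * (4/5 - t * (3/5) * s2) < D * (4/5 - t * (3/5) * s1).
  by rewrite ltr_pM2l //; lra.
by rewrite ltr_pXn2r // ?nnegrE ?ltW // (lt_trans amp2_gt0).
Qed.

Hypotheses (ed : end_decisive M) (pos : positive_amplitude M).

Lemma compl_acc_prob x : acc_prob (compl_qfa M) x = compl_amp (acc_mass M x) ^+ 2.
Proof.
rewrite (end_decisive_acc_probE (compl_qfa_end_decisive M)) compl_psi_after compl_U_prep.
rewrite (mulmxA (proj _ Acc)) projAcc_prep_mx -mulmxA ext_mx_embed sqnorm_projAcc.
rewrite final_mx_embed_acc.
have -> : \sum_(i | is_acc i) (U M None *m psi_after M x) i 0 = toC (acc_mass M x).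
  by rewrite rmorph_sum; apply: eq_bigr => i; exact: acc_ampE.
by rewrite -!rmorphM -rmorphB -rmorphM /= expr0n /= addr0.
Qed.

End ComplementAcceptance.

Theorem lemma4p13 (R : realType) (Sigma : finType) (L : seq Sigma -> Prop)
    (M : mmqfa R Sigma) :
  end_decisive M -> positive_amplitude M -> accepts_one_sided M L ->
  exists M' : mmqfa R Sigma,
    end_decisive M' /\ accepts_bounded M' (fun x => ~ L x).
Proof.
move=> ed pos [c [c_gt0 sepL]].
exists (compl_qfa M); split; first exact: compl_qfa_end_decisive.
(* The cap keeps [compl_amp] positive at [c'], whatever the size of [c]. *)
pose c' := Num.min c (acc_count M + 1).
have K1_gt0 : 0 < acc_count M + 1 by rewrite ltr_wpDl ?acc_count_ge0.
have c'_gt0 : 0 < c' by rewrite lt_min c_gt0.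
have le_c'c : c' <= c by rewrite ge_min lexx.
have le_c'K1 : c' <= acc_count M + 1 by rewrite ge_min lexx orbT.
apply: (@accepts_bounded_gap _ _ _ _ (compl_amp M c' ^+ 2) (compl_amp M 0 ^+ 2)).
- exact: sqr_compl_amp_lt.
- move=> x /(proj2 (sepL x)) /(acc_mass_eq0 pos ed) mass0.
  by rewrite compl_acc_prob // mass0.
- move=> x nnLx; have lt_c_acc : c < acc_prob M x.
    have [//|le_acc_c] := ltP c (acc_prob M x).
    by exfalso; apply: nnLx => /(proj1 (sepL x)); lra.
  rewrite compl_acc_prob // ltW // sqr_compl_amp_lt ?ltW //.
  + by rewrite (le_lt_trans le_c'c) // (lt_le_trans lt_c_acc) ?acc_prob_le_mass.
  + by have := acc_mass_le_count M x; lra.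
Qed.
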